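(* Under Assumption A with $T>0$, let $\bar\alpha\in(\alpha_\nu-1/T,+\infty)$ be any solution of the fixed point equation $\alpha=\alpha_\nu-\frac1T+\frac{G(\alpha,2)}{2T^2}$. Then $$\frac{\alpha_\nu}{2}-\frac1T-\frac{L}{2T^2\alpha_\nu\beta_\mu}+\frac12\sqrt{\Big(\alpha_\nu+\frac{L}{T^2\beta_\mu\alpha_\nu}\Big)^2+\frac{4\alpha_\nu}{T^2\beta_\mu}}\;\le\;\bar\alpha\;\le\;\frac{\alpha_\nu}{2}-\frac1T+\frac12\sqrt{\alpha_\nu^2+\frac{4\alpha_\nu}{T^2\beta_\mu}}.$$
   Context: For $L>0$ let $f_L(r)=2L^{1/2}\tanh(rL^{1/2}/2)$ for $r\ge0$. For a differentiable $U:\mathbb{R}^d\to\mathbb{R}$ and $r>0$ let $\kappa_U(r)=\inf\{|x-y|^{-2}\langle\nabla U(x)-\nabla U(y),x-y\rangle:|x-y|=r\}$. Assumption A: $\mu(\mathrm{d}x)=e^{-U^\mu(x)}\mathrm{d}x$, $\nu(\mathrm{d}y)=e^{-U^\nu(y)}\mathrm{d}y$ probability measures on $\mathbb{R}^d$, $U^\mu,U^\nu\in C^2$; $\mu$ has finite second moment and finite entropy w.r.t. Lebesgue, and $\langle v,\nabla^2U^\mu(x)v\rangle\le\beta_\mu|v|^2$ for all $x,v$ with $\beta_\mu>0$; and there exist $\alpha_\nu>0,L>0$ with $\kappa_{U^\nu}(r)\ge\alpha_\nu-r^{-1}f_L(r)$ for all $r>0$. For $\alpha\ge\alpha_\nu-1/T$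 define $F(\alpha,s)=\beta_\mu s+\frac{s}{T(1+T\alpha)}+\frac{s^{1/2}f_L(s^{1/2})}{(1+T\alpha)^2}$ for $s>0$, and $G(\alpha,u)=\inf\{s\ge0:F(\alpha,s)\ge u\}$ for $u>0$. *)

From Stdlib Require Import Reals.
From Coquelicot Require Import Coquelicot.
Open Scope R_scope.

Definition tanhR (x : R) : R := (exp x - exp (- x)) / (exp x + exp (- x)).

Definition f_L (L r : R) : R := 2 * sqrt L * tanhR (r * sqrt L / 2).

Definition F_fun (beta_mu L T alpha s : R) : R :=
  beta_mu * s + s / (T * (1 + T * alpha))
  + sqrt s * f_L L (sqrt s) / (1 + T * alpha) ^ 2.

Definition G_fun (beta_mu L T alpha u : R) : Rbar :=
  Glb_Rbar (fun s => 0 <= s /\ u <= F_fun beta_mu L T alpha s).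

(** Since [0 <= f_L(r) <= L r] (because [tanh y <= y]), the function [F(alpha, .)]
    lies between the lines of slopes [K1 = beta_mu + 1/(T(1+T alpha))] and
    [K2 = K1 + L/(1+T alpha)^2], so [2/K2 <= G(alpha, 2) <= 2/K1].  Writing a fixed
    point as [abar = alpha_nu - 1/T + z] with [z > 0], one has [1 + T abar = T (alpha_nu + z)]
    and [G(abar, 2) = 2 T^2 z]; the two bounds on [G] become quadratic inequalities in
    [z] (for the lower one, [alpha_nu + z >= alpha_nu] is used once more), whose
    roots are the two bounds of the theorem. *)

From Stdlib Require Import Reals Lra.
From Coquelicot Require Import Coquelicot.
Open Scope R_scope.

Local Ltac positivity :=
  repeat first [apply Rdiv_lt_0_compat | apply Rmult_lt_0_compat | apply pow_lt]; lra.

Lemma exp_opp_le_exp (y : R) : 0 <= y -> exp (- y) <= exp y.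
Proof.
intros Hy; destruct (Req_dec y 0) as [-> | Hy0].
- rewrite Ropp_0; lra.
- left; apply exp_increasing; lra.
Qed.

Lemma sinh_le_mul_cosh (y : R) : 0 <= y ->
  exp y - exp (- y) <= y * (exp y + exp (- y)).
Proof.
intros Hy.
set (h := fun t => t * (exp t + exp (- t)) - (exp t - exp (- t))).
assert (Hdh : forall t, is_derive h t (t * (exp t - exp (- t)))).
{ intro t; unfold h; auto_derive; [easy | ring]. }
destruct (MVT_gen h 0 y (fun t => t * (exp t - exp (- t)))) as [c [Hc Hmvt]].
- intros t _; apply Hdh.
- intros t _; apply continuity_pt_filterlim, (ex_derive_continuous (V := R_NormedModule)).
  eexists; apply Hdh.
- rewrite Rmin_left, Rmax_right in Hc by lra.
  assert (Hexp : exp (- c) <= exp c) by (apply exp_opp_le_exp; lra).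
  assert (Hh0 : h 0 = 0) by (unfold h; rewrite Ropp_0; ring).
  assert (0 <= c * (exp c - exp (- c))) by (apply Rmult_le_pos; lra).
  unfold h in Hh0, Hmvt; nra.
Qed.

Lemma tanhR_bounds (y : R) : 0 <= y -> 0 <= tanhR y <= y.
Proof.
intros Hy; unfold tanhR.
assert (Hexp : exp (- y) <= exp y) by (apply exp_opp_le_exp; lra).
assert (Hpos : 0 < exp y + exp (- y))
  by (pose proof (exp_pos y); pose proof (exp_pos (- y)); lra).
split.
- apply Rdiv_le_0_compat; lra.
- apply Rle_div_l; [exact Hpos |]. now apply sinh_le_mul_cosh.
Qed.

Lemma f_L_bounds (L r : R) : 0 < L -> 0 <= r -> 0 <= f_L L r <= L * r.
Proof.
intros HL Hr; unfold f_L.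
assert (HsL : 0 < sqrt L) by (apply sqrt_lt_R0; lra).
assert (HL2 : sqrt L * sqrt L = L) by (apply sqrt_sqrt; lra).
destruct (tanhR_bounds (r * sqrt L / 2)) as [Hlo Hhi]; [nra |].
split; nra.
Qed.

Lemma F_fun_bounds (beta L T al s : R) : 0 < L -> 0 <= s -> 0 < 1 + T * al ->
  (beta + 1 / (T * (1 + T * al))) * s <= F_fun beta L T al s <=
  (beta + 1 / (T * (1 + T * al)) + L / (1 + T * al) ^ 2) * s.
Proof.
intros HL Hs Hc; unfold F_fun.
destruct (f_L_bounds L (sqrt s) HL (sqrt_pos s)) as [Hflo Hfhi].
assert (Hss : sqrt s * sqrt s = s) by (apply sqrt_sqrt; lra).
assert (Hprod : 0 <= sqrt s * f_L L (sqrt s) <= L * s)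
  by (pose proof (sqrt_pos s); split; nra).
assert (Hd : 0 < (1 + T * al) ^ 2) by positivity.
assert (0 <= sqrt s * f_L L (sqrt s) / (1 + T * al) ^ 2 <= L * s / (1 + T * al) ^ 2).
{ split; [apply Rdiv_le_0_compat; lra |].
  apply Rmult_le_compat_r; [left; apply Rinv_0_lt_compat |]; lra. }
unfold Rdiv in *; split; nra.
Qed.

Lemma Glb_Rbar_linear_sandwich (f : R -> R) (a b u g : R) :
  0 < a -> 0 < b -> 0 <= u ->
  (forall s, 0 <= s -> a * s <= f s <= b * s) ->
  Glb_Rbar (fun s => 0 <= s /\ u <= f s) = Finite g ->
  u / b <= g <= u / a.
Proof.
intros Ha Hb Hu Hf Hg.
destruct (Glb_Rbar_correct (fun s => 0 <= s /\ u <= f s)) as [Hlb Hglb].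
rewrite Hg in Hlb, Hglb.
split.
- apply (Hglb (u / b)).
  intros s [Hs Hus]; simpl.
  apply Rle_div_l; [exact Hb |].
  destruct (Hf s Hs); lra.
- apply (Hlb (u / a)).
  assert (Hua : 0 <= u / a) by (apply Rdiv_le_0_compat; lra).
  split; [exact Hua |].
  destruct (Hf (u / a) Hua) as [Hlo _].
  replace (a * (u / a)) with u in Hlo by (field; lra); exact Hlo.
Qed.

Lemma G_fun_bounds (beta L T al u g : R) :
  0 < beta -> 0 < L -> 0 < T -> 0 < 1 + T * al -> 0 <= u ->
  G_fun beta L T al u = Finite g ->
  u / (beta + 1 / (T * (1 + T * al)) + L / (1 + T * al) ^ 2) <= g <=
  u / (beta + 1 / (T * (1 + T * al))).
Proof.
intros Hbeta HL HT Hc Hu Hg.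
assert (0 < 1 / (T * (1 + T * al))) by positivity.
assert (0 < L / (1 + T * al) ^ 2) by positivity.
apply (Glb_Rbar_linear_sandwich (F_fun beta L T al)); [lra | lra | exact Hu | | exact Hg].
intros s Hs; now apply F_fun_bounds.
Qed.

Lemma le_quadratic_root (b c z : R) : 0 <= 2 * z + b -> z ^ 2 + b * z <= c ->
  z <= (- b + sqrt (b ^ 2 + 4 * c)) / 2.
Proof.
intros Hpos Hq.
assert (Hsq : 2 * z + b <= sqrt (b ^ 2 + 4 * c)).
{ rewrite <- (sqrt_pow2 (2 * z + b) Hpos); apply sqrt_le_1_alt; nra. }
lra.
Qed.

Lemma quadratic_root_le (b c z : R) : 0 <= 2 * z + b -> c <= z ^ 2 + b * z ->
  (- b + sqrt (b ^ 2 + 4 * c)) / 2 <= z.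
Proof.
intros Hpos Hq.
assert (Hsq : sqrt (b ^ 2 + 4 * c) <= 2 * z + b).
{ rewrite <- (sqrt_pow2 (2 * z + b) Hpos); apply sqrt_le_1_alt; nra. }
lra.
Qed.

Section FixedPointExcess.

Variables beta alpha L T z : R.
Hypotheses (Hbeta : 0 < beta) (Halpha : 0 < alpha) (HL : 0 < L) (HT : 0 < T)
  (Hz : 0 < z).

Lemma excess_quadratic_upper :
  2 * T ^ 2 * z <= 2 / (beta + 1 / (T * (T * (alpha + z)))) ->
  z ^ 2 + alpha * z <= alpha / (T ^ 2 * beta).
Proof.
intros Hg.
assert (HK : 0 < beta + 1 / (T * (T * (alpha + z))))
  by (assert (0 < 1 / (T * (T * (alpha + z)))) by positivity; lra).
apply (proj2 (Rle_div_r _ _ _ HK)) in Hg.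
replace (2 * T ^ 2 * z * (beta + 1 / (T * (T * (alpha + z)))))
  with (2 * (T ^ 2 * beta * z * (alpha + z) + z) / (alpha + z)) in Hg by (field; lra).
apply (proj1 (Rle_div_l _ _ (alpha + z) ltac:(lra))) in Hg.
apply Rle_div_r; [positivity | lra].
Qed.

Lemma excess_quadratic_lower :
  2 / (beta + 1 / (T * (T * (alpha + z))) + L / (T * (alpha + z)) ^ 2) <= 2 * T ^ 2 * z ->
  alpha / (T ^ 2 * beta) <= z ^ 2 + (alpha + L / (T ^ 2 * beta * alpha)) * z.
Proof.
intros Hg.
assert (HK : 0 < beta + 1 / (T * (T * (alpha + z))) + L / (T * (alpha + z)) ^ 2).
{ assert (0 < 1 / (T * (T * (alpha + z)))) by positivity.
  assert (0 < L / (T * (alpha + z)) ^ 2) by positivity.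
  lra. }
apply (proj1 (Rle_div_l _ _ _ HK)) in Hg.
replace (2 * T ^ 2 * z * (beta + 1 / (T * (T * (alpha + z))) + L / (T * (alpha + z)) ^ 2))
  with (2 * (T ^ 2 * beta * z * (alpha + z) ^ 2 + z * (alpha + z) + L * z) / (alpha + z) ^ 2)
  in Hg by (field; lra).
apply (proj2 (Rle_div_r _ _ ((alpha + z) ^ 2) ltac:(positivity))) in Hg.
(* Hg reads [alpha (alpha + z) <= T^2 beta z (alpha + z)^2 + L z]; multiply by
   [alpha / (alpha + z)] and use [alpha <= alpha + z] on the [L] term. *)
assert (Hk : alpha ^ 2 <= T ^ 2 * beta * alpha * z * (alpha + z) + L * z).
{ apply (Rmult_le_reg_l (alpha + z)); [lra |].
  assert (alpha * (alpha * (alpha + z)) <=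
          alpha * (T ^ 2 * beta * z * (alpha + z) ^ 2 + L * z))
    by (apply Rmult_le_compat_l; lra).
  assert (L * z * alpha <= L * z * (alpha + z)) by (apply Rmult_le_compat_l; nra).
  nra. }
apply Rle_div_l; [positivity |].
replace ((z ^ 2 + (alpha + L / (T ^ 2 * beta * alpha)) * z) * (T ^ 2 * beta))
  with ((T ^ 2 * beta * alpha * z * (alpha + z) + L * z) / alpha)
  by (field; repeat split; lra).
apply Rle_div_r; [exact Halpha | nra].
Qed.

End FixedPointExcess.

Theorem mainTheorem2 (beta_mu alpha_nu L T abar : R)
  (hbeta : 0 < beta_mu) (halpha : 0 < alpha_nu) (hL : 0 < L) (hT : 0 < T)
  (hrange : alpha_nu - 1 / T < abar)
  (hfix : exists g : R, G_fun beta_mu L T abar 2 = Finite g /\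
          abar = alpha_nu - 1 / T + g / (2 * T ^ 2)) :
  alpha_nu / 2 - 1 / T - L / (2 * T ^ 2 * alpha_nu * beta_mu)
    + / 2 * sqrt ((alpha_nu + L / (T ^ 2 * beta_mu * alpha_nu)) ^ 2
                  + 4 * alpha_nu / (T ^ 2 * beta_mu))
  <= abar <=
  alpha_nu / 2 - 1 / T + / 2 * sqrt (alpha_nu ^ 2 + 4 * alpha_nu / (T ^ 2 * beta_mu)).
Proof.
destruct hfix as [g [HG Hab]].
set (z := abar - (alpha_nu - 1 / T)).
assert (Hz : 0 < z) by (unfold z; lra).
assert (Hg : g = 2 * T ^ 2 * z) by (unfold z; rewrite Hab; field; lra).
assert (Hc : 1 + T * abar = T * (alpha_nu + z)) by (unfold z; field; lra).
assert (Hcpos : 0 < 1 + T * abar) by (rewrite Hc; positivity).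
destruct (G_fun_bounds beta_mu L T abar 2 g hbeta hL hT Hcpos ltac:(lra) HG) as [Hlo Hhi].
rewrite Hc, Hg in Hlo, Hhi.
assert (Hab' : abar = alpha_nu - 1 / T + z) by (unfold z; ring).
assert (Hk : 4 * alpha_nu / (T ^ 2 * beta_mu) = 4 * (alpha_nu / (T ^ 2 * beta_mu)))
  by (field; repeat split; lra).
rewrite Hk, Hab'.
split.
- pose proof (quadratic_root_le (alpha_nu + L / (T ^ 2 * beta_mu * alpha_nu))
    (alpha_nu / (T ^ 2 * beta_mu)) z) as Hroot.
  assert (0 < L / (T ^ 2 * beta_mu * alpha_nu)) by positivity.
  assert (L / (2 * T ^ 2 * alpha_nu * beta_mu) = / 2 * (L / (T ^ 2 * beta_mu * alpha_nu)))
    by (field; repeat split; lra).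
  specialize (Hroot ltac:(lra) (excess_quadratic_lower beta_mu alpha_nu L T z
    hbeta halpha hL hT Hz Hlo)); lra.
- pose proof (le_quadratic_root alpha_nu (alpha_nu / (T ^ 2 * beta_mu)) z ltac:(lra)
    (excess_quadratic_upper beta_mu alpha_nu T z hbeta halpha hT Hz Hhi)); lra.
Qed.
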